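(* Let $\mathcal M$ be a miss-MDP whose missingness function $M$ is simple MAR, and let the estimate $\widehat M$ be computed from a dataset $\mathcal D$ by the AsMAR rule described in the context. Then: (i) For every precision $\varepsilon>0$ and confidence threshold $\delta\in(0,1)$ there exists a number $n^*\in\mathbb N$ such that, if $\mathcal D$ consists of $n^*$ histories generated independently under the fair behaviour policy $\pi_b$, then with probability at least $\delta$ (over the generation of $\mathcal D$) we have $|\widehat M(z\mid s)-M(z\mid s)|\le\varepsilon$ for all states $s\in S$ reachable in $\mathcal M$ and all observations $z\in Z$. (ii) Dually, for every dataset size (number of histories) and every confidence threshold $\delta\in(0,1)$ there exists $\varepsilon>0$ such that, with probability at least $\delta$ over the generation of $\mathcal D$, $|\widehat M(z\mid s)-M(z\mid s)|\le\varepsilon$ for all reachable $s\in S$ and all $z\in Z$.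
   Context: A missingness-MDP (miss-MDP) is a tuple $\mathcal M=(S,A,T,\iota,\varrho,Z,M,\gamma)$ with finite factored state space $S=\prod_{i\in I}S_i$ where $I=\{1,\dots,n\}$ is the set of feature indices, finite action set $A$, transition function $T:S\times A\to\Delta(S)$, initial distribution $\iota\in\Delta(S)$, reward $\varrho:S\times A\to\mathbb R$, discount factor $\gamma\in[0,1)$, observation space $Z=\prod_{i\in I}(S_i\cup\{\bot\})$ ($\bot$ means ''missing''), and missingness function $M:S\to\Delta(Z)$ such that for all $s\in S$, all $z$ in the support of $M(s)$ and all $i\in I$, $z_i\in\{s_i,\bot\}$. Write $M(z\mid s)=M(s)(z)$. Let $R=\{0,1\}^n$ and $f_R:Z\to R$ with $f_R(z)_i=0$ iff $z_i=\bot$. A run of $\mathcal M$ under a policy: $s^{(0)}\sim\iota$, $z^{(t)}\sim M(s^{(t)})$, action $a^{(t)}$ chosen by the policy from past observations/actions, $s^{(t+1)}\sim T(s^{(t)},a^{(t)})$; its history is $(z^{(0)},a^{(0)},z^{(1)},a^{(1)},\dots)$. A state is reachable if it is visited with positive probability under some policy. A dataset $\mathcal D=(h_1,\dots,h_k)$ consists of finite histories generated independently under a fixed behaviour policy $\pi_b$ that is fair: every reachable state is visited with positive probability within each generated history. For $z\in Z$, $\#_{\mathcal D}(z)$ is the total number of occurrences of $z$ as an observation in the histories of $\mathcal D$, and $\#_{\mathcal D}(Z')=\sum_{z\in Z'}\#_{\mathcal D}(z)$ for $Z'\subseteq Z$. Let $I_{\text{always}}=\{i\in I:\forall s\in S,\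 \Pr_{z\sim M(s)}(z_i=\bot)=0\}$. $M$ is simple MAR iff for all $s,s'\in S$ with $s_i=s'_i$ for all $i\in I_{\text{always}}$ and all $r\in R$: $\Pr_{z\sim M(s)}(f_R(z)=r)=\Pr_{z\sim M(s')}(f_R(z)=r)$. AsMAR rule: let $\hat I_{\text{always}}=\{i\in I:\#_{\mathcal D}(\{z\in Z: z_i=\bot\})=0\}$. For $s\in S$ and $r\in R$ let $Z_s^r=\{z\in Z:\forall i\in I,\ (i\in\hat I_{\text{always}}\Rightarrow z_i=s_i)\text{ and }(r_i=0\Rightarrow z_i=\bot)\}$ and $\#_{\mathcal D}(s,r)=\#_{\mathcal D}(Z_s^r)$. Then $\widehat M(z\mid s)=\#_{\mathcal D}(s,f_R(z))\big/\sum_{r\in R}\#_{\mathcal D}(s,r)$. *)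

From HB Require Import structures.
From mathcomp Require Import all_boot all_order all_algebra.
From mathcomp Require Import boolp reals.
Set Implicit Arguments. Unset Strict Implicit. Unset Printing Implicit Defensive.
Import Order.TTheory GRing.Theory Num.Theory.
Local Open Scope ring_scope.

Section MissMDP.
Variables (R : realType) (n : nat) (Sf : 'I_n -> finType) (A : finType).

Definition state := {dffun forall i : 'I_n, Sf i}.
(* observation space Z = prod_i (S_i u {bot}); None encodes bot *)
Definition obs := {dffun forall i : 'I_n, option (Sf i)}.
(* missingness patterns R = {0,1}^n; true = observed (1), false = missing (0) *)
Definition pattern := {ffun 'I_n -> bool}.
Definition fR (z : obs) : pattern := [ffun i => z i != None].

Definition is_dist (X : finType) (p : {ffun X -> R}) :=
  (forall x, 0 <= p x) /\ \sum_x p x = 1.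

Record missMDP := MissMDP {
  trans : state -> A -> {ffun state -> R};
  init : {ffun state -> R};
  reward : state -> A -> R;
  discount : R;
  missf : state -> {ffun obs -> R} }.

Definition valid_missMDP (m : missMDP) :=
  [/\ forall s a, is_dist (trans m s a),
      is_dist (init m),
      0 <= discount m < 1,
      forall s, is_dist (missf m s) &
      forall s z, 0 < missf m s z ->
        forall i, z i = None \/ z i = Some (s i)].

(* history-dependent randomised policy: past (z,a) pairs, current z *)
Definition policy := seq (obs * A) -> obs -> {ffun A -> R}.
Definition valid_policy (pol : policy) := forall h z, is_dist (pol h z).

Definition step := (state * obs * A)%type.

Fixpoint run_aux (m : missMDP) (pol : policy) (sp : state) (ap : A)
    (h : seq (obs * A)) (tr : seq step) : R :=
  match tr with
  | [::] => 1
  | (s, z, a) :: tr' =>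
      trans m sp ap s * missf m s z * pol h z a *
      run_aux m pol s a (rcons h (z, a)) tr'
  end.

Definition run_prob (m : missMDP) (pol : policy) (tr : seq step) : R :=
  match tr with
  | [::] => 1
  | (s, z, a) :: tr' =>
      init m s * missf m s z * pol [::] z a * run_aux m pol s a [:: (z, a)] tr'
  end.

Definition prob_at (m : missMDP) (pol : policy) (t : nat) (s : state) : R :=
  \sum_(tr : t.+1.-tuple step | (tnth tr ord_max).1.1 == s) run_prob m pol tr.

Definition reachable (m : missMDP) (s : state) : Prop :=
  exists pol : policy, valid_policy pol /\ exists t, 0 < prob_at m pol t s.

(* histories have L+1 observations (time steps 0..L); fairness *)
Definition fair (m : missMDP) (pol : policy) (L : nat) : Prop :=
  forall s, reachable m s ->
    0 < \sum_(tr : L.+1.-tuple step | has (fun x : step => x.1.1 == s) tr)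
          run_prob m pol tr.

Definition I_always (m : missMDP) : {set 'I_n} :=
  [set i | [forall s, (\sum_(z : obs | z i == None) missf m s z) == 0]].

Definition simple_MAR (m : missMDP) : Prop :=
  forall s s' : state, (forall i, i \in I_always m -> s i = s' i) ->
    forall r : pattern,
      \sum_(z : obs | fR z == r) missf m s z = \sum_(z : obs | fR z == r) missf m s' z.

Definition history_of (tr : seq step) : seq (obs * A) :=
  [seq (x.1.2, x.2) | x <- tr].

Definition cnt_obs (D : seq (seq (obs * A))) (z : obs) : nat :=
  sumn [seq count (fun p : obs * A => p.1 == z) h | h <- D].

Definition cnt_set (D : seq (seq (obs * A))) (P : pred obs) : nat :=
  (\sum_(z : obs | P z) cnt_obs D z)%N.

Definition Ihat (D : seq (seq (obs * A))) : {set 'I_n} :=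
  [set i | cnt_set D (fun z : obs => z i == None) == 0%N].

Definition Zsr (D : seq (seq (obs * A))) (s : state) (r : pattern) : pred obs :=
  fun z => [forall i, ((i \in Ihat D) ==> (z i == Some (s i))) &&
                      ((~~ r i) == (z i == None))].

Definition cnt_sr D s r : nat := cnt_set D (Zsr D s r).

Definition consistent (s : state) (z : obs) : bool :=
  [forall i, (z i == None) || (z i == Some (s i))].

Definition Mhat (D : seq (seq (obs * A))) (s : state) (z : obs) : R :=
  if consistent s z then
    (cnt_sr D s (fR z))%:R / (\sum_(r : pattern) cnt_sr D s r)%:R
  else 0.

Definition prob_good (m : missMDP) (pol : policy) (L k : nat) (eps : R) : R :=
  \sum_(D : k.-tuple (L.+1.-tuple step) |
        [forall s : state, `[< reachable m s >] ==>
           [forall z : obs,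
              `| Mhat [seq history_of (tval tr) | tr <- tval D] s z - missf m s z |
                <= eps]])
     \prod_(j < k) run_prob m pol (tnth D j).

End MissMDP.

From HB Require Import structures.
From mathcomp Require Import all_boot all_order all_algebra.
From mathcomp Require Import boolp reals.
From mathcomp Require Import ring lra.
Import Order.TTheory GRing.Theory Num.Theory.
Local Open Scope ring_scope.
Set Implicit Arguments. Unset Strict Implicit. Unset Printing Implicit Defensive.

(* Let J be the set of features observed at every step of every trajectory of positive
   probability.  J contains I_always, so by simple MAR the distribution of the missingness
   pattern of a state s depends only on s restricted to J.  For a dataset of k independent
   histories, Chebyshev's inequality bounds by O(1/k) the probability that one of finitely
   many empirical averages strays from its mean: the frequency of histories visiting s
   (positive by fairness), the frequency of histories missing feature i (positive iff i is
   not in J), and, for each (s, r), the number of steps agreeing with s on J and showing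
   pattern r minus M(r | s) times the number of steps agreeing with s on J, whose mean is 0
   because each step contributes a term with conditional mean 0.  Outside that event the
   estimated set equals J and the AsMAR ratio is within eps of M(z | s).  Part (ii) is
   immediate with eps = 1, as both estimate and truth lie in [0, 1]. *)

Lemma sum_tuple0 (V : nmodType) (T : finType) (F : 0.-tuple T -> V) :
  \sum_(t : 0.-tuple T) F t = F [tuple].
Proof. by rewrite (big_pred1 [tuple]) // => t; rewrite /= [t]tuple0; exact/esym/eqP. Qed.

Lemma sum_tuple_cons (V : nmodType) (T : finType) k (F : k.+1.-tuple T -> V) :
  \sum_(t : k.+1.-tuple T) F t = \sum_(x : T) \sum_(t : k.-tuple T) F [tuple of x :: t].
Proof.
rewrite pair_big /=.
apply: (reindex (fun p : T * k.-tuple T => [tuple of p.1 :: p.2])).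
exists (fun t : k.+1.-tuple T => (thead t, [tuple of behead t])) => [[x t] _|t _].
  by rewrite /= theadE; congr pair; apply: val_inj.
by rewrite /= -tuple_eta.
Qed.

Lemma sum_tuple_ffun (V : nmodType) (T : finType) k (F : k.-tuple T -> V) :
  \sum_(t : k.-tuple T) F t = \sum_(f : {ffun 'I_k -> T}) F [tuple f i | i < k].
Proof.
apply: (reindex (fun f : {ffun 'I_k -> T} => [tuple f i | i < k])).
exists (fun t : k.-tuple T => [ffun i => tnth t i]) => [f _|t _].
  by apply/ffunP => i; rewrite ffunE tnth_mktuple.
by apply: eq_from_tnth => i; rewrite tnth_mktuple ffunE.
Qed.

Lemma bigA_distr_tuple (R : comPzSemiRingType) (T : finType) k (f : 'I_k -> T -> R) :
  \sum_(t : k.-tuple T) \prod_(j < k) f j (tnth t j) = \prod_(j < k) \sum_(x : T) f j x.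
Proof.
rewrite bigA_distr_bigA sum_tuple_ffun; apply: eq_bigr => g _.
by apply: eq_bigr => j _; rewrite tnth_mktuple.
Qed.

Section IidSamples.
Variables (R : realFieldType) (X : finType) (w : X -> R).
Hypothesis w_ge0 : forall x, 0 <= w x.
Hypothesis sum_w : \sum_x w x = 1.

Definition iid_weight k (D : k.-tuple X) : R := \prod_(j < k) w (tnth D j).

Lemma iid_weight_ge0 k (D : k.-tuple X) : 0 <= iid_weight D.
Proof. exact: prodr_ge0. Qed.

Lemma sum_iid_weight k : \sum_(D : k.-tuple X) iid_weight D = 1.
Proof. by rewrite /iid_weight (bigA_distr_tuple (fun _ => w)) sum_w big1. Qed.

Lemma iid_weight_gt0_coord k (D : k.-tuple X) j : 0 < iid_weight D -> 0 < w (tnth D j).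
Proof.
move=> hD; rewrite lt_def w_ge0 andbT; apply/eqP => wD0.
by move: hD; rewrite /iid_weight (bigD1 j) //= wD0 mul0r ltxx.
Qed.

(* Pad [g] with the constant [1] on the other coordinates and distribute. *)
Lemma iid_mean_coord k (j : 'I_k) (g : X -> R) :
  \sum_(D : k.-tuple X) iid_weight D * g (tnth D j) = \sum_x w x * g x.
Proof.
pose u (i : 'I_k) x := w x * (if i == j then g x else 1).
transitivity (\sum_(D : k.-tuple X) \prod_(i < k) u i (tnth D i)).
  apply: eq_bigr => D _; rewrite /u big_split /=; congr (_ * _).
  by rewrite (bigD1 j) //= eqxx big1 ?mulr1 // => i /negbTE ->.
rewrite bigA_distr_tuple (bigD1 j) //= [X in _ * X]big1 ?mulr1.
  by apply: eq_bigr => x _; rewrite /u eqxx.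
by move=> i /negbTE ij; rewrite /u ij -[RHS]sum_w; apply: eq_bigr => x _; rewrite mulr1.
Qed.

Lemma iid_mean_coord2 k (j l : 'I_k) (g h : X -> R) : j != l ->
  \sum_(D : k.-tuple X) iid_weight D * (g (tnth D j) * h (tnth D l))
   = (\sum_x w x * g x) * (\sum_x w x * h x).
Proof.
move=> jl.
pose u (i : 'I_k) x := w x * (if i == j then g x else 1) * (if i == l then h x else 1).
transitivity (\sum_(D : k.-tuple X) \prod_(i < k) u i (tnth D i)).
  apply: eq_bigr => D _; rewrite /u !big_split /= -mulrA; congr (_ * (_ * _)).
    by rewrite (bigD1 j) //= eqxx big1 ?mulr1 // => i /negbTE ->.
  by rewrite (bigD1 l) //= eqxx big1 ?mulr1 // => i /negbTE ->.
rewrite bigA_distr_tuple (bigD1 j) //= (bigD1 l) /=; last by rewrite eq_sym.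
rewrite [X in _ * (_ * X)]big1 ?mulr1.
  congr (_ * _); apply: eq_bigr => x _; rewrite /u eqxx.
    by rewrite (negbTE jl) mulr1.
  by rewrite eq_sym (negbTE jl) mulr1.
move=> i /andP[il ij]; rewrite /u (negbTE ij) (negbTE il) -[RHS]sum_w.
by apply: eq_bigr => x _; rewrite !mulr1.
Qed.

Section CenteredSum.
Variables (Y : X -> R) (c : R).
Hypothesis mean_Y : \sum_x w x * Y x = 0.
Hypothesis Y_le : forall x, `|Y x| <= c.

(* Cross terms vanish by independence, so only the [k] diagonal terms remain. *)
Lemma iid_second_moment k :
  \sum_(D : k.-tuple X) iid_weight D * (\sum_(j < k) Y (tnth D j)) ^+ 2
    <= k%:R * c ^+ 2.
Proof.
have -> : \sum_(D : k.-tuple X) iid_weight D * (\sum_(j < k) Y (tnth D j)) ^+ 2 =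
    \sum_(j < k) \sum_(l < k) \sum_(D : k.-tuple X)
       iid_weight D * (Y (tnth D j) * Y (tnth D l)).
  transitivity (\sum_(D : k.-tuple X) \sum_(j < k) \sum_(l < k)
                  iid_weight D * (Y (tnth D j) * Y (tnth D l))).
    apply: eq_bigr => D _; rewrite expr2 mulr_suml mulr_sumr.
    by apply: eq_bigr => j _; rewrite !mulr_sumr.
  by rewrite exchange_big /=; apply: eq_bigr => j _; rewrite exchange_big.
have -> : k%:R * c ^+ 2 = \sum_(j < k) c ^+ 2 by rewrite sumr_const card_ord mulr_natl.
apply: ler_sum => j _.
rewrite (bigD1 j) //= [X in _ + X]big1 ?addr0; last first.
  by move=> l lj; rewrite iid_mean_coord2 1?eq_sym // mean_Y mul0r.
rewrite (iid_mean_coord j (fun x => Y x * Y x)) -[c ^+ 2]mul1r -sum_w mulr_suml.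
apply: ler_sum => x _; apply: ler_wpM2l => //.
by rewrite -expr2 -real_normK ?num_real // lerXn2r ?nnegrE // (le_trans _ (Y_le x)).
Qed.

Lemma iid_chebyshev k (b : R) : 0 < b -> (0 < k)%N ->
  \sum_(D : k.-tuple X) iid_weight D * (b * k%:R < `|\sum_(j < k) Y (tnth D j)|)%R%:R
    <= c ^+ 2 / (b ^+ 2 * k%:R).
Proof.
move=> b_gt0 k_gt0.
have bk_gt0 : 0 < b * k%:R by rewrite mulr_gt0 ?ltr0n.
pose S (D : k.-tuple X) := \sum_(j < k) Y (tnth D j).
apply: (@le_trans _ _ (\sum_(D : k.-tuple X) iid_weight D * S D ^+ 2 / (b * k%:R) ^+ 2)).
  apply: ler_sum => D _; rewrite -mulrA; apply: ler_wpM2l; first exact: iid_weight_ge0.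
  case: (boolP (_ < _)) => [bS|_]; last by rewrite divr_ge0 ?sqr_ge0.
  rewrite mulr1n (ler_pdivlMr _ _ (exprn_gt0 2 bk_gt0)) mul1r.
  rewrite -[S D ^+ 2]real_normK ?num_real //; have := ltW bS; nra.
rewrite -mulr_suml.
apply: (@le_trans _ _ (k%:R * c ^+ 2 / (b * k%:R) ^+ 2)).
  by apply: ler_wpM2r; rewrite ?invr_ge0 ?sqr_ge0 ?iid_second_moment.
rewrite le_eqVlt; apply/orP; left; apply/eqP.
by field; rewrite gt_eqF ?ltr0n //= gt_eqF.
Qed.

End CenteredSum.
End IidSamples.

Lemma natr_count (R : pzSemiRingType) (T : Type) (P : pred T) (s : seq T) :
  (count P s)%:R = \sum_(x <- s) (P x)%:R :> R.
Proof. by elim: s => [|x s IH]; rewrite ?big_nil ?big_cons //= natrD IH. Qed.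

Lemma sum_count_fiber (T : Type) (Z : finType) (g : T -> Z) (P : pred T) (Q : pred Z)
    (s : seq T) :
  (\sum_(z | Q z) count (fun x => P x && (g x == z)) s = count (fun x => P x && Q (g x)) s)%N.
Proof.
elim: s => [|x s IH] /=; first by rewrite big1.
rewrite big_split /= IH; congr (_ + _)%N.
have [Qgx|nQgx] := boolP (Q (g x)).
  rewrite (bigD1 (g x)) //= eqxx big1 ?addn0 // => z /andP[_ zg].
  by rewrite eq_sym (negbTE zg) andbF.
rewrite andbF big1 // => z Qz.
by case: (g x =P z) => [gxz|]; [rewrite gxz Qz in nQgx | rewrite andbF].
Qed.

Lemma sum_indicator_exists (R : numDomainType) (I : finType) (P : pred I) :
  [exists i, P i]%:R <= \sum_i (P i)%:R :> R.
Proof.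
case: existsP => [[i Pi]|_]; last exact: sumr_ge0.
by rewrite (bigD1 i) //= Pi lerDl sumr_ge0.
Qed.

Section Runs.
Variables (R : realType) (n : nat) (Sf : 'I_n -> finType) (A : finType).
Variables (m : missMDP R Sf A) (pol : policy R Sf A).
Hypothesis trans_dist : forall s a, is_dist (trans m s a).
Hypothesis missf_dist : forall s, is_dist (missf m s).
Hypothesis pol_dist : valid_policy pol.

Local Notation step := (step Sf A).
Local Notation state := (state Sf).
Local Notation obs := (obs Sf).

Definition run_from (d : state -> R) (h : seq (obs * A)) (tr : seq step) : R :=
  match tr with
  | [::] => 1
  | x :: tr' => d x.1.1 * missf m x.1.1 x.1.2 * pol h x.1.2 x.2 *
      run_aux m pol x.1.1 x.2 (rcons h (x.1.2, x.2)) tr'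
  end.

Lemma run_auxE sp ap h tr : run_aux m pol sp ap h tr = run_from (trans m sp ap) h tr.
Proof. by case: tr => [|[[s z] a] tr]. Qed.

Lemma run_probE tr : run_prob m pol tr = run_from (init m) [::] tr.
Proof. by case: tr => [|[[s z] a] tr]. Qed.

Lemma sum_step (F : step -> R) :
  \sum_(x : step) F x = \sum_(s : state) \sum_(z : obs) \sum_(a : A) F (s, z, a).
Proof. by rewrite pair_bigA /= pair_bigA /=; apply: eq_bigr => [[[s z] a]]. Qed.

Lemma run_from_ge0 d h tr : (forall s, 0 <= d s) -> 0 <= run_from d h tr.
Proof.
elim: tr d h => [|x tr IH] d h d_ge0 //=.
rewrite run_auxE mulr_ge0 ?IH ?mulr_ge0 //.
- by case: (missf_dist x.1.1).
- by case: (pol_dist h x.1.2).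
- by case: (trans_dist x.1.1 x.2).
Qed.

Lemma sum_first_step d h : \sum_s d s = 1 ->
  \sum_(x : step) d x.1.1 * missf m x.1.1 x.1.2 * pol h x.1.2 x.2 = 1.
Proof.
move=> sum_d; rewrite sum_step /= -sum_d; apply: eq_bigr => s _.
transitivity (\sum_z d s * missf m s z).
  by apply: eq_bigr => z _; rewrite -mulr_sumr; case: (pol_dist h z) => _ ->; rewrite mulr1.
by rewrite -mulr_sumr; case: (missf_dist s) => _ ->; rewrite mulr1.
Qed.

Lemma sum_run_from k d h : \sum_s d s = 1 ->
  \sum_(t : k.-tuple step) run_from d h t = 1.
Proof.
elim: k d h => [|k IH] d h sum_d; first by rewrite sum_tuple0.
rewrite sum_tuple_cons -(sum_first_step h sum_d); apply: eq_bigr => x _ /=.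
under eq_bigr do rewrite run_auxE.
by rewrite -mulr_sumr IH ?mulr1 //; case: (trans_dist x.1.1 x.2).
Qed.

(* Peel off the first step: the rest of the run has total mass 1 by [sum_run_from]. *)
Lemma run_from_sum_mean0 k d h (y : step -> R) :
  (forall s h, \sum_z \sum_a missf m s z * pol h z a * y (s, z, a) = 0) ->
  \sum_(t : k.-tuple step) run_from d h t * (\sum_(x <- t) y x) = 0.
Proof.
move=> y_mean0; elim: k d h => [|k IH] d h; first by rewrite sum_tuple0 big_nil mulr0.
rewrite sum_tuple_cons.
transitivity (\sum_(x : step) d x.1.1 * missf m x.1.1 x.1.2 * pol h x.1.2 x.2 * y x).
  apply: eq_bigr => x _ /=.
  under eq_bigr do rewrite big_cons run_auxE mulrDr.
  have mass := sum_run_from k (rcons h (x.1.2, x.2)) (proj2 (trans_dist x.1.1 x.2)).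
  rewrite big_split /= -mulr_suml -mulr_sumr mass.
  by under eq_bigr do rewrite -mulrA; rewrite -mulr_sumr IH !mulr0 addr0 mulr1.
rewrite sum_step big1 // => s _.
transitivity (d s * \sum_z \sum_a missf m s z * pol h z a * y (s, z, a));
  last by rewrite y_mean0 mulr0.
rewrite mulr_sumr; apply: eq_bigr => z _.
by rewrite mulr_sumr; apply: eq_bigr => a _ /=; rewrite !mulrA.
Qed.

Lemma run_from_gt0_missf d h tr : (forall s, 0 <= d s) -> 0 < run_from d h tr ->
  forall x, x \in tr -> 0 < missf m x.1.1 x.1.2.
Proof.
elim: tr d h => [|x tr IH] d h d_ge0 //=; rewrite run_auxE => run_gt0 y.
have trans_ge0 : forall s, 0 <= trans m x.1.1 x.2 s by case: (trans_dist x.1.1 x.2).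
have missf_ge0 := proj1 (missf_dist x.1.1) x.1.2.
have pol_ge0 := proj1 (pol_dist h x.1.2) x.2.
move: run_gt0; rewrite !mulr_ge0_gt0 ?mulr_ge0 ?run_from_ge0 //.
case/andP=> /andP[/andP[_ missf_gt0] _] tail_gt0.
by rewrite inE => /orP[/eqP ->//|]; exact: IH tail_gt0 y.
Qed.

End Runs.

Lemma ratio_close (R : realFieldType) (a N p e b k : R) : 0 < b -> 0 < k ->
  b * k <= N -> `|a - p * N| <= e * b * k -> `|a / N - p| <= e.
Proof.
move=> b_gt0 k_gt0 bk_le a_close.
have N_gt0 : 0 < N by apply: lt_le_trans bk_le; rewrite mulr_gt0.
have -> : a / N - p = (a - p * N) / N by field; rewrite gt_eqF.
have e_ge0 : 0 <= e.
  by rewrite -(pmulr_lge0 _ (mulr_gt0 b_gt0 k_gt0)) mulrA (le_trans _ a_close).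
rewrite normrM normfV (gtr0_norm N_gt0) ler_pdivrMr //.
by apply: le_trans a_close _; rewrite -mulrA ler_wpM2l.
Qed.

Lemma small_ratio_eventually (R : archiRealFieldType) (K e : R) : 0 < e ->
  exists k : nat, (0 < k)%N /\ K / k%:R <= e.
Proof.
move=> e_gt0; exists (Num.bound `|K / e|).+1; split => //.
rewrite ler_pdivrMr ?ltr0n // mulrC -ler_pdivrMr //.
apply: le_trans (ler_norm _) (ltW (lt_le_trans (archi_boundP _) _)) => //.
by rewrite ler_nat.
Qed.

Section AsMARConsistency.
Variables (R : realType) (n : nat) (Sf : 'I_n -> finType) (A : finType).
Variables (m : missMDP R Sf A) (pib : policy R Sf A) (L : nat).
Hypothesis m_valid : valid_missMDP m.
Hypothesis m_MAR : simple_MAR m.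
Hypothesis pib_dist : valid_policy pib.
Hypothesis pib_fair : fair m pib L.

Local Notation step := (step Sf A).
Local Notation state := (state Sf).
Local Notation obs := (obs Sf).
Local Notation pattern := (pattern n).

Let trans_dist : forall s a, is_dist (trans m s a). Proof. by case: m_valid. Qed.
Let init_dist : is_dist (init m). Proof. by case: m_valid. Qed.
Let missf_dist : forall s, is_dist (missf m s). Proof. by case: m_valid. Qed.
Let missf_support s z : 0 < missf m s z -> forall i, z i = None \/ z i = Some (s i).
Proof. by case: m_valid => _ _ _ _; apply. Qed.

Lemma missf_ge0 s z : 0 <= missf m s z.
Proof. by case: (missf_dist s). Qed.

Lemma missf_le1 s z : missf m s z <= 1.
Proof.
case: (missf_dist s) => _ <-.
by rewrite (bigD1 z) //= lerDl sumr_ge0 // => z' _; apply: missf_ge0.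
Qed.

Lemma missf_inconsistent s z : ~~ consistent s z -> missf m s z = 0.
Proof.
move=> inconsistent; apply/eqP; rewrite eq_le missf_ge0 andbT leNgt.
apply: contra inconsistent => /missf_support z_sub; apply/forallP => i.
by case: (z_sub i) => ->; rewrite ?eqxx ?orbT.
Qed.

Lemma Mhat_ge0_le1 (D : seq (seq (obs * A))) s z : 0 <= Mhat R D s z <= 1.
Proof.
rewrite /Mhat; case: ifP => _; last by rewrite lexx ler01.
rewrite divr_ge0 //=; set a := cnt_sr _ _ _; set b := (\sum_r _)%N.
have a_le_b : (a <= b)%N by rewrite /b (bigD1 (fR z)) //= leq_addr.
have [->|b_gt0] := posnP b; first by rewrite invr0 mulr0 ler01.
by rewrite ler_pdivrMr ?ltr0n // mul1r ler_nat.
Qed.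

Definition traj := (L.+1).-tuple step.
Definition traj_prob (x : traj) : R := run_prob m pib x.
Definition dataset k (D : k.-tuple traj) := [seq history_of (tval x) | x <- tval D].

Lemma traj_prob_ge0 x : 0 <= traj_prob x.
Proof. by rewrite /traj_prob run_probE; apply: run_from_ge0 => //; case: init_dist. Qed.

Lemma sum_traj_prob : \sum_x traj_prob x = 1.
Proof.
rewrite /traj_prob; under eq_bigr do rewrite run_probE.
by apply: sum_run_from => //; case: init_dist.
Qed.

Lemma traj_prob_gt0_missf x st : 0 < traj_prob x -> st \in tval x ->
  0 < missf m st.1.1 st.1.2.
Proof.
rewrite /traj_prob run_probE => x_gt0.
by apply: (run_from_gt0_missf trans_dist missf_dist pib_dist _ x_gt0); case: init_dist.
Qed.

Definition prob_traj (P : pred traj) : R := \sum_x traj_prob x * (P x)%:R.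
Definition centered (P : pred traj) (x : traj) : R := (P x)%:R - prob_traj P.

Lemma prob_traj_ge0 P : 0 <= prob_traj P.
Proof. by apply: sumr_ge0 => x _; rewrite mulr_ge0 ?traj_prob_ge0. Qed.

Lemma prob_traj_le1 P : prob_traj P <= 1.
Proof.
rewrite -sum_traj_prob; apply: ler_sum => x _.
by rewrite ler_piMr ?traj_prob_ge0 // lern1 leq_b1.
Qed.

Lemma prob_traj_gt0 (P : pred traj) x : P x -> 0 < traj_prob x -> 0 < prob_traj P.
Proof.
move=> Px x_gt0; apply: lt_le_trans (_ : traj_prob x * (P x)%:R <= _).
  by rewrite Px mulr1.
by rewrite /prob_traj (bigD1 x) //= lerDl sumr_ge0 // => y _; rewrite mulr_ge0 ?traj_prob_ge0.
Qed.

Lemma centered_mean0 P : \sum_x traj_prob x * centered P x = 0.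
Proof.
rewrite /centered; under eq_bigr do rewrite mulrBr.
by rewrite sumrB -mulr_suml sum_traj_prob mul1r subrr.
Qed.

Lemma centered_bound P x : `|centered P x| <= 2.
Proof.
rewrite /centered; have := prob_traj_ge0 P; have := prob_traj_le1 P.
by case: (P x); rewrite /= ?mulr1n ?mulr0n ler_norml => le1 ge0; apply/andP; split; lra.
Qed.

Definition visits (s : state) : pred traj := has (fun st : step => st.1.1 == s).
Definition misses (i : 'I_n) : pred traj := has (fun st : step => st.1.2 i == None).

Lemma prob_traj_visits_gt0 s : reachable m s -> 0 < prob_traj (visits s).
Proof.
move=> /pib_fair; rewrite /prob_traj big_mkcond /=.
congr (0 < _); apply: eq_bigr => x _; rewrite /visits /traj_prob.
by case: has; rewrite ?mulr1 ?mulr0.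
Qed.

Lemma cnt_set_dataset k (D : k.-tuple traj) (P : pred obs) :
  cnt_set (dataset D) P = (\sum_(j < k) count (fun st : step => P st.1.2) (tnth D j))%N.
Proof.
rewrite /cnt_set /cnt_obs /dataset.
under eq_bigr do rewrite sumnE big_map big_map.
rewrite exchange_big /= big_tuple; apply: eq_bigr => j _.
under eq_bigr do rewrite count_map.
exact: (sum_count_fiber (fun st : step => st.1.2) predT).
Qed.

(* The population counterpart of [Ihat]: the features never seen missing
   along a trajectory of positive probability. *)
Definition always_observed : {set 'I_n} :=
  [set i | [forall x : traj, (0 < traj_prob x) ==> ~~ misses i x]].

Definition agree_on_J (s s' : state) : bool := [forall i in always_observed, s' i == s i].

Definition pat_prob (s : state) (r : pattern) : R := \sum_(z | fR z == r) missf m s z.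

Lemma pat_prob_ge0 s r : 0 <= pat_prob s r.
Proof. by apply: sumr_ge0 => z _; apply: missf_ge0. Qed.

Lemma pat_prob_le1 s r : pat_prob s r <= 1.
Proof.
case: (missf_dist s) => _ <-; rewrite [X in _ <= X](bigID (fun z => fR z == r)) /= lerDl.
by apply: sumr_ge0 => z _; apply: missf_ge0.
Qed.

Lemma I_always_sub : I_always m \subset always_observed.
Proof.
apply/subsetP => i; rewrite !inE => /forallP never_missing.
apply/forallP => x; apply/implyP => x_gt0; apply/hasPn => st st_x; apply/negP => /eqP st_miss.
have /psumr_eq0P missf0 := eqP (never_missing st.1.1).
have := traj_prob_gt0_missf x_gt0 st_x.
by rewrite missf0 ?ltxx ?st_miss // => z _; apply: missf_ge0.
Qed.

Lemma pat_prob_agree s s' r : agree_on_J s s' -> pat_prob s' r = pat_prob s r.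
Proof.
move=> /forallP agree; apply: esym; apply: m_MAR => i /(subsetP I_always_sub) iJ.
by have /implyP/(_ iJ)/eqP := agree i.
Qed.

Lemma pat_prob_fR s z : consistent s z -> pat_prob s (fR z) = missf m s z.
Proof.
move=> /forallP z_cons; rewrite /pat_prob (bigD1 z) //= big1 ?addr0 // => z'.
case/andP=> /eqP same_pat z'z; apply/eqP; rewrite eq_le missf_ge0 andbT leNgt.
apply: contra z'z => /missf_support z'_sub; apply/eqP/ffunP => i.
have := z_cons i; have := z'_sub i; have := congr1 (fun r : pattern => r i) same_pat.
rewrite !ffunE; case: (z' i) => [a|]; case: (z i) => [b|] //= _.
by move=> [//|[->]] /eqP [->].
Qed.

(* Subtracting the pattern probability of the current state (rather than of [s]) gives
   conditional mean zero; by simple MAR the two agree, see [pat_devE]. *)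
Definition pat_step_dev s r (st : step) : R :=
  (agree_on_J s st.1.1)%:R * ((fR st.1.2 == r)%:R - pat_prob st.1.1 r).

Definition pat_dev s r (x : traj) : R := \sum_(st <- tval x) pat_step_dev s r st.

Lemma pat_dev_mean0 s r : \sum_x traj_prob x * pat_dev s r x = 0.
Proof.
rewrite /traj_prob /pat_dev; under eq_bigr do rewrite run_probE.
apply: (run_from_sum_mean0 trans_dist missf_dist pib_dist) => s' h /=.
rewrite /pat_step_dev /=.
transitivity (\sum_z missf m s' z *
    ((agree_on_J s s')%:R * ((fR z == r)%:R - pat_prob s' r))).
  apply: eq_bigr => z _; under eq_bigr do rewrite mulrAC.
  by rewrite -mulr_sumr; case: (pib_dist h z) => _ ->; rewrite mulr1.
under eq_bigr do rewrite mulrCA mulrBr.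
rewrite -mulr_sumr sumrB -mulr_suml (proj2 (missf_dist s')) mul1r.
suff -> : \sum_z missf m s' z * (fR z == r)%:R = pat_prob s' r by rewrite subrr mulr0.
by rewrite /pat_prob [RHS]big_mkcond; apply: eq_bigr => z _; case: eqP; rewrite ?mulr1 ?mulr0.
Qed.

Lemma pat_step_dev_bound s r st : `|pat_step_dev s r st| <= 2.
Proof.
rewrite /pat_step_dev; have := pat_prob_ge0 st.1.1 r; have := pat_prob_le1 st.1.1 r.
case: (agree_on_J _ _); case: (_ == r); rewrite /= ?mul1r ?mul0r ?normr0 //= => le1 ge0;
  rewrite ler_norml; apply/andP; split; lra.
Qed.

Lemma pat_dev_bound s r x : `|pat_dev s r x| <= 2 * (L.+1)%:R.
Proof.
rewrite -[in (L.+1)%:R](size_tuple x) /pat_dev; elim: (tval x) => [|st sq IH].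
  by rewrite big_nil normr0 mulr0.
rewrite big_cons /= -[(size sq).+1%:R]natr1 mulrDr mulr1 addrC.
exact: le_trans (ler_normD _ _) (lerD IH (pat_step_dev_bound _ _ _)).
Qed.

Lemma pat_devE s r x : pat_dev s r x =
  (count (fun st : step => agree_on_J s st.1.1 && (fR st.1.2 == r)) x)%:R
  - pat_prob s r * (count (fun st : step => agree_on_J s st.1.1) x)%:R.
Proof.
rewrite !natr_count mulr_sumr -sumrB /pat_dev; apply: eq_bigr => st _.
rewrite /pat_step_dev; have [agree|_] := boolP (agree_on_J s st.1.1).
  by rewrite (pat_prob_agree r agree) mul1r mulr1.
by rewrite mul0r mulr0 subrr.
Qed.

Definition event := ((state * pattern) + state + 'I_n)%type.

Definition dev (e : event) : traj -> R :=
  match e with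
  | inl (inl (s, r)) => pat_dev s r
  | inl (inr s) => centered (visits s)
  | inr i => centered (misses i)
  end.

(* The fallback [1] is arbitrary: it only keeps the tolerance positive. *)
Definition half_prob (P : pred traj) : R := if 0 < prob_traj P then prob_traj P / 2 else 1.

Definition tol (eps : R) (e : event) : R :=
  match e with
  | inl (inl (s, _)) => eps * half_prob (visits s)
  | inl (inr s) => half_prob (visits s)
  | inr i => half_prob (misses i)
  end.

Definition deviates eps k (D : k.-tuple traj) (e : event) : bool :=
  tol eps e * k%:R < `|\sum_(j < k) dev e (tnth D j)|.

Lemma dev_mean0 e : \sum_x traj_prob x * dev e x = 0.
Proof. by case: e => [[[s r]|s]|i]; rewrite /= ?pat_dev_mean0 ?centered_mean0. Qed.

Lemma dev_bound e x : `|dev e x| <= 2 * (L.+1)%:R.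
Proof.
case: e => [[[s r]|s]|i] /=; first exact: pat_dev_bound.
all: by apply: le_trans (centered_bound _ _) _; rewrite ler_peMr // ler1n.
Qed.

Lemma half_prob_gt0 P : 0 < half_prob P.
Proof. by rewrite /half_prob; case: ifP => // P_gt0; rewrite divr_gt0. Qed.

Lemma tol_gt0 eps e : 0 < eps -> 0 < tol eps e.
Proof. by move=> eps_gt0; case: e => [[[s r]|s]|i]; rewrite /= ?mulr_gt0 ?half_prob_gt0. Qed.

Definition accurate eps k (D : k.-tuple traj) : bool :=
  [forall s : state, `[< reachable m s >] ==>
     [forall z : obs, `|Mhat R (dataset D) s z - missf m s z| <= eps]].

Lemma prob_good_iid eps k :
  prob_good m pib L k eps =
    \sum_(D : k.-tuple traj) iid_weight traj_prob D * (accurate eps D)%:R.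
Proof.
rewrite /prob_good big_mkcond; apply: eq_bigr => D _.
by rewrite /accurate; case: ifP; rewrite /= ?mulr1n ?mulr0n ?mulr1 ?mulr0.
Qed.

Section TypicalDataset.
Variables (eps : R) (k : nat) (D : k.-tuple traj).
Hypothesis k_gt0 : (0 < k)%N.
Hypothesis D_gt0 : 0 < iid_weight traj_prob D.
Hypothesis D_typical : forall e, ~~ deviates eps D e.

Lemma dataset_obs_always_observed j st i : st \in tval (tnth D j) ->
  i \in always_observed -> st.1.2 i = Some (st.1.1 i).
Proof.
have x_gt0 := iid_weight_gt0_coord traj_prob_ge0 j D_gt0.
move=> st_x; rewrite inE => /forallP/(_ (tnth D j))/implyP/(_ x_gt0)/hasPn/(_ st st_x).
by case: (missf_support (traj_prob_gt0_missf x_gt0 st_x) i) => ->.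
Qed.

(* A feature missing on some trajectory of positive probability is missing in a positive
   fraction of a typical dataset, so [Ihat] does not contain it. *)
Lemma Ihat_dataset : Ihat (dataset D) = always_observed.
Proof.
apply/setP => i; rewrite !inE cnt_set_dataset sum_nat_eq0; apply/idP/idP.
  move=> /forallP no_miss; apply: contraT => /forallPn[x].
  rewrite negb_imply negbK => /andP[x_gt0 x_miss].
  have q_gt0 := prob_traj_gt0 x_miss x_gt0.
  have := D_typical (inr i); rewrite /deviates /= /half_prob q_gt0 -leNgt.
  have -> : \sum_(j < k) centered (misses i) (tnth D j) = - (prob_traj (misses i) * k%:R).
    transitivity (\sum_(j < k) - prob_traj (misses i)).
      by apply: eq_bigr => j _; rewrite /centered /misses has_count (eqP (no_miss j)) sub0r.
    by rewrite sumrN sumr_const card_ord mulr_natr.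
  by rewrite normrN ger0_norm ?mulr_ge0 ?prob_traj_ge0 // ler_pM2r ?ltr0n // => ?; lra.
move=> iJ; have {}iJ : i \in always_observed by rewrite inE.
apply/forallP => j; rewrite -leqn0 leqNgt -has_count.
by apply/hasPn => st st_x; rewrite (dataset_obs_always_observed st_x iJ).
Qed.

Lemma Zsr_dataset s r j st : st \in tval (tnth D j) ->
  Zsr (dataset D) s r st.1.2 = agree_on_J s st.1.1 && (fR st.1.2 == r).
Proof.
move=> st_x; have obsJ i := dataset_obs_always_observed (i := i) st_x.
rewrite /Zsr Ihat_dataset; apply/forallP/andP => [Z | [agree /eqP <-] i].
  split.
    apply/forallP => i; apply/implyP => iJ.
    by have /andP[/implyP/(_ iJ)] := Z i; rewrite obsJ // => /eqP[->].
  by apply/eqP/ffunP => i; rewrite ffunE; have /andP[_ /eqP <-] := Z i; rewrite negbK.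
rewrite ffunE negbK eqxx andbT; apply/implyP => iJ.
by rewrite obsJ //; have /implyP/(_ iJ)/eqP -> := forallP agree i.
Qed.

Lemma cnt_sr_dataset s r : cnt_sr (dataset D) s r =
  (\sum_(j < k) count (fun st : step => agree_on_J s st.1.1 && (fR st.1.2 == r)) (tnth D j))%N.
Proof.
rewrite /cnt_sr cnt_set_dataset; apply: eq_bigr => j _; apply: eq_in_count => st.
exact: Zsr_dataset.
Qed.

Lemma cnt_total_dataset s : (\sum_(r : pattern) cnt_sr (dataset D) s r =
  \sum_(j < k) count (fun st : step => agree_on_J s st.1.1) (tnth D j))%N.
Proof.
under eq_bigr do rewrite cnt_sr_dataset.
rewrite exchange_big; apply: eq_bigr => j _.
rewrite (sum_count_fiber (fun st : step => fR st.1.2) _ predT).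
by apply: eq_count => st; rewrite andbT.
Qed.

(* The denominator of the AsMAR ratio is at least the number of histories visiting [s],
   hence at least half its expectation. *)
Lemma Mhat_dataset_close s z : 0 < eps -> reachable m s ->
  `|Mhat R (dataset D) s z - missf m s z| <= eps.
Proof.
move=> eps_gt0 /prob_traj_visits_gt0 q_gt0.
rewrite /Mhat; have [z_cons|z_incons] := boolP (consistent s z); last first.
  by rewrite missf_inconsistent // subrr normr0 ltW.
rewrite cnt_sr_dataset cnt_total_dataset -(pat_prob_fR z_cons) !natr_sum.
have := D_typical (inl (inl (s, fR z))); rewrite /deviates -leNgt /= /half_prob q_gt0.
have := D_typical (inl (inr s)); rewrite /deviates -leNgt /= /half_prob q_gt0.
move=> visits_ok pat_ok.
rewrite (eq_bigr _ (fun j _ => pat_devE _ _ _)) sumrB -mulr_sumr in pat_ok.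
apply: (ratio_close (b := prob_traj (visits s) / 2) (k := k%:R)) pat_ok;
  rewrite ?divr_gt0 ?ltr0n //.
apply: le_trans (_ : _ <= \sum_(j < k) (visits s (tnth D j))%:R) _.
  move: visits_ok; rewrite /centered sumrB sumr_const card_ord -mulr_natr ler_norml.
  by case/andP; lra.
apply: ler_sum => j _; rewrite ler_nat; case: (boolP (visits s _)) => //= visit.
rewrite -has_count; apply: sub_has visit => st /eqP->.
by apply/forallP => i; apply/implyP.
Qed.

Lemma typical_dataset_accurate : 0 < eps -> accurate eps D.
Proof.
move=> eps_gt0; apply/forallP => s; apply/implyP => /asboolP s_reach.
by apply/forallP => z; apply: Mhat_dataset_close.
Qed.

End TypicalDataset.

Definition chebyshev_const eps : R :=
  \sum_(e : event) (2 * (L.+1)%:R) ^+ 2 / tol eps e ^+ 2.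

Lemma prob_deviates eps k : 0 < eps -> (0 < k)%N ->
  \sum_(D : k.-tuple traj) iid_weight traj_prob D * [exists e, deviates eps D e]%:R
    <= chebyshev_const eps / k%:R.
Proof.
move=> eps_gt0 k_gt0.
apply: le_trans (_ : _ <= \sum_e \sum_(D : k.-tuple traj)
                           iid_weight traj_prob D * (deviates eps D e)%:R) _.
  rewrite exchange_big /=; apply: ler_sum => D _; rewrite -mulr_sumr.
  by rewrite ler_wpM2l ?(iid_weight_ge0 traj_prob_ge0) ?sum_indicator_exists.
rewrite /chebyshev_const mulr_suml; apply: ler_sum => e _; rewrite -mulrA -invfM /deviates.
by move: (iid_chebyshev traj_prob_ge0 sum_traj_prob (dev_mean0 e) (dev_bound e)
  (tol_gt0 e eps_gt0) k_gt0).
Qed.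

Lemma prob_good_lower eps k : 0 < eps -> (0 < k)%N ->
  1 - chebyshev_const eps / k%:R <= prob_good m pib L k eps.
Proof.
move=> eps_gt0 k_gt0; rewrite prob_good_iid.
have w_ge0 := iid_weight_ge0 traj_prob_ge0 (k := k).
apply: le_trans (_ : _ <= \sum_(D : k.-tuple traj)
           iid_weight traj_prob D * (1 - [exists e, deviates eps D e]%:R)) _.
  under [X in _ <= X]eq_bigr do rewrite mulrBr mulr1.
  by rewrite sumrB sum_iid_weight ?sum_traj_prob // lerB ?prob_deviates.
apply: ler_sum => D _; have [_|/existsPn typical] := boolP [exists e, deviates eps D e].
  by rewrite subrr mulr0 mulr_ge0.
have [D0|D_gt0] := eqVneq (iid_weight traj_prob D) 0; first by rewrite D0 !mul0r.
by rewrite subr0 typical_dataset_accurate // lt_def D_gt0 w_ge0.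
Qed.

Lemma accuracy_eventually eps delta : 0 < eps -> 0 < delta < 1 ->
  exists nstar : nat, delta <= prob_good m pib L nstar eps.
Proof.
move=> eps_gt0 /andP[_ delta_lt1].
have delta'_gt0 : 0 < 1 - delta by rewrite subr_gt0.
have [k [k_gt0 small]] := small_ratio_eventually (chebyshev_const eps) delta'_gt0.
exists k; apply: le_trans (prob_good_lower eps_gt0 k_gt0); lra.
Qed.

Lemma prob_good_one k : prob_good m pib L k 1 = 1.
Proof.
rewrite prob_good_iid -[RHS](sum_iid_weight sum_traj_prob k).
apply: eq_bigr => D _; suff -> : accurate 1 D by rewrite mulr1.
apply/forallP => s; apply/implyP => _; apply/forallP => z.
have /andP[Mhat_ge0 Mhat_le1] := Mhat_ge0_le1 (dataset D) s z.
have := missf_ge0 s z; have := missf_le1 s z.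
by rewrite ler_norml => le1 ge0; apply/andP; split; lra.
Qed.

End AsMARConsistency.

Theorem theorem1 (R : realType) (n : nat) (Sf : 'I_n -> finType) (A : finType)
    (m : missMDP R Sf A) (pib : policy R Sf A) (L : nat) :
  valid_missMDP m -> simple_MAR m -> valid_policy pib -> fair m pib L ->
  (forall eps delta : R, 0 < eps -> 0 < delta < 1 ->
     exists nstar : nat, delta <= prob_good m pib L nstar eps) /\
  (forall (k : nat) (delta : R), 0 < delta < 1 ->
     exists eps : R, 0 < eps /\ delta <= prob_good m pib L k eps).
Proof.
move=> m_valid m_MAR pib_dist pib_fair; split.
  by move=> eps delta; apply: accuracy_eventually.
move=> k delta /andP[_ delta_lt1]; exists 1; split => //.
by rewrite prob_good_one // ltW.
Qed.
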